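(* Every positive stochastic choice function on a finite set $X$ is an unrestricted generalized nested logit.
   Context: $X$ is a finite set, $\mathscr{A}$ the nonempty subsets; a stochastic choice function is $p:X\times\mathscr{A}\to[0,1]$ with $\sum_{a\in A}p(a,A)=1$, $p(x,A)=0$ for $x\notin A$, and $p(a,A)>0$ for $a\in A$. $p$ is an unrestricted generalized nested logit if there exist subsets $X_1,\dots,X_K$ of $X$ (not necessarily disjoint), numbers $\alpha^k_x\ge 0$ with $\sum_{k=1}^K\alpha^k_x=1$ for each $x\in X$ and $\alpha^k_x=0$ iff $x\notin X_k$, $u:X\to\mathbb{R}_{++}$ and $\lambda_1,\dots,\lambda_K>0$ such that for every $A\in\mathscr{A}$ and $x\in A$, $p(x,A)=\sum_{k:\,x\in A\cap X_k}\frac{(\alpha^k_x u(x))^{1/\lambda_k}}{\sum_{y\in A\cap X_k}(\alpha^k_y u(y))^{1/\lambda_k}}\cdot\frac{\Big(\sum_{y\in A\cap X_k}(\alpha^k_y u(y))^{1/\lambda_k}\Big)^{\lambda_k}}{\sum_{l:\,A\cap X_l\ne\emptyset}\Big(\sum_{z\in A\cap X_l}(\alpha^l_z u(z))^{1/\lambda_l}\Big)^{\lambda_l}}$. *)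

From HB Require Import structures.
From mathcomp Require Import all_boot all_order all_algebra.
From mathcomp Require Import all_classical all_reals.
From mathcomp Require Import exp.
Set Implicit Arguments. Unset Strict Implicit. Unset Printing Implicit Defensive.
Import Order.TTheory GRing.Theory Num.Theory.
Local Open Scope ring_scope.

Definition stochastic_choice (R : realType) (X : finType)
  (p : X -> {set X} -> R) : Prop :=
  forall A : {set X}, A != finset.set0 ->
    [/\ forall x, 0 <= p x A <= 1,
        \sum_(a in A) p a A = 1,
        forall x, x \notin A -> p x A = 0
      & forall a, a \in A -> 0 < p a A].

Definition gnl_nestsum (R : realType) (X : finType) (K : nat)
  (Xk : 'I_K -> {set X}) (alpha : 'I_K -> X -> R) (u : X -> R)
  (lam : 'I_K -> R) (k : 'I_K) (A : {set X}) : R :=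
  \sum_(y in A :&: Xk k) powR (alpha k y * u y) (lam k)^-1.

Definition gnl_prob (R : realType) (X : finType) (K : nat)
  (Xk : 'I_K -> {set X}) (alpha : 'I_K -> X -> R) (u : X -> R)
  (lam : 'I_K -> R) (x : X) (A : {set X}) : R :=
  \sum_(k : 'I_K | x \in A :&: Xk k)
     (powR (alpha k x * u x) (lam k)^-1 / gnl_nestsum Xk alpha u lam k A)
     * (powR (gnl_nestsum Xk alpha u lam k A) (lam k)
        / \sum_(l : 'I_K | A :&: Xk l != finset.set0)
             powR (gnl_nestsum Xk alpha u lam l A) (lam l)).

Definition unrestricted_GNL (R : realType) (X : finType)
  (p : X -> {set X} -> R) : Prop :=
  exists (K : nat) (Xk : 'I_K -> {set X}) (alpha : 'I_K -> X -> R)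
         (u : X -> R) (lam : 'I_K -> R),
    [/\ forall k x, 0 <= alpha k x,
        forall x, \sum_(k < K) alpha k x = 1,
        forall k x, alpha k x = 0 <-> x \notin Xk k,
        [/\ forall x, 0 < u x & forall k, 0 < lam k]
      & forall A : {set X}, A != finset.set0 -> forall x, x \in A ->
          p x A = gnl_prob Xk alpha u lam x A].

(* Nests are indexed by the pairs (E, z) with z in E: nest (E, z) is the set E, in
   which z has weight 1 and every other item a small weight eps, and all nests share
   the exponent n + 1.  Writing s_j for the scale of nest j and V_j(A) for the weight
   of A in it, the GNL probability of x in A becomes
     sum_j s_j v_j(x) V_j(A)^n / sum_j s_j V_j(A)^(n+1),
   so it suffices to solve the linear system sum_j s_j v_j(x) V_j(A)^n = d(A) p(x, A)
   with s > 0 and d(A) = eps^-|A|: summing over x in A then turns the denominator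
   into d(A).  The diagonal entry of row (A, x) comes from nest (A, x) itself.  Nests
   on smaller menus are damped by d, the other nests on the same menu by eps, and a
   nest on a menu E not contained in A by (V_j(A)/V_j(E))^n <= (1 - eps/(|X|+1))^n.
   For large n the system is therefore strictly diagonally dominant, and such a
   system has a positive solution. *)

From mathcomp Require Import all_boot all_order all_algebra.
From mathcomp Require Import all_classical all_reals exp.
From mathcomp Require Import topology normedtype sequences.
From mathcomp Require Import ring lra.
Set Implicit Arguments. Unset Strict Implicit. Unset Printing Implicit Defensive.
Import Order.TTheory GRing.Theory Num.Theory numFieldNormedType.Exports.
Local Open Scope ring_scope.

Lemma sum_enum_val (R : nmodType) (J : finType) (F : J -> R) :
  \sum_k F k = \sum_(l < #|J|) F (enum_val l).
Proof. by rewrite -big_enum_val. Qed.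

Lemma exists_exprn_le (R : realType) (z e : R) :
  0 <= z < 1 -> 0 < e -> exists n : nat, z ^+ n <= e.
Proof.
move=> /andP[z0 z1] e0; have z1n : `|z| < 1 by rewrite ger0_norm.
have [N _ zNe] := cvgr0_norm_le _ (cvg_expr z1n) _ e0.
by exists N; rewrite -(ger0_norm z0) -normrX; apply: zNe => /=.
Qed.

Lemma powR_exprnV (R : realType) (x : R) m : 0 <= x -> powR (x ^+ m.+1) (m.+1%:R)^-1 = x.
Proof. by move=> x0; rewrite -powR_mulrn // -powRrM divff ?powRr1 // pnatr_eq0. Qed.

Lemma exprn_powRV (R : realType) (x : R) m : 0 <= x -> powR x (m.+1%:R)^-1 ^+ m.+1 = x.
Proof.
by move=> x0; rewrite -powR_mulrn ?powR_ge0 // -powRrM mulVf ?powRr1 // pnatr_eq0.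
Qed.

Section DominantSystems.
Variable R : realFieldType.
Implicit Types (I : finType) (q : R).

Definition supnorm I (t : I -> R) : R := \big[Num.max/0]_j `|t j|.

Lemma supnorm_ge0 I (t : I -> R) : 0 <= supnorm t.
Proof. exact: bigmax_ge_id. Qed.

Lemma norm_le_supnorm I (t : I -> R) i : `|t i| <= supnorm t.
Proof. exact: (le_bigmax _ (fun j => `|t j|)). Qed.

Lemma norm_sum_le_supnorm I (M t : I -> R) :
  `|\sum_j M j * t j| <= (\sum_j `|M j|) * supnorm t.
Proof.
rewrite mulr_suml; apply: le_trans (ler_norm_sum _ _ _) _.
by apply: ler_sum => j _; rewrite normrM ler_wpM2l ?norm_le_supnorm.
Qed.

Lemma supnorm_le_contraction I (t : I -> R) (c q : R) : 0 <= c -> 0 <= q < 1 ->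
  (forall i, `|t i| <= c + q * supnorm t) -> supnorm t <= c / (1 - q).
Proof.
move=> c0 /andP[q0 q1] tc; have m0 := supnorm_ge0 t.
have mc : supnorm t <= c + q * supnorm t.
  apply/bigmax_leP; split=> [|i _]; last exact: tc.
  by rewrite addr_ge0 ?mulr_ge0.
by rewrite ler_pdivlMr ?subr_gt0 //; lra.
Qed.

Lemma contraction_fixpoint_eq0 I (M : I -> I -> R) q : 0 <= q < 1 ->
  (forall i, \sum_j `|M i j| <= q) ->
  forall t : I -> R, (forall i, t i = \sum_j M i j * t j) -> forall i, t i = 0.
Proof.
move=> q01 Mq t tM i; apply/eqP; rewrite -normr_le0.
have : supnorm t <= 0 / (1 - q).
  apply: supnorm_le_contraction => // k; rewrite add0r {1}tM.
  apply: le_trans (norm_sum_le_supnorm _ _) _.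
  by rewrite ler_wpM2r ?Mq ?supnorm_ge0.
by rewrite mul0r; apply: le_trans; exact: norm_le_supnorm.
Qed.

Lemma exists_affine_fixpoint I (M : I -> I -> R) (b : I -> R) q :
  0 <= q < 1 -> (forall i, \sum_j `|M i j| <= q) ->
  exists t : I -> R, forall i, t i = b i + \sum_j M i j * t j.
Proof.
move=> q01 Mq; pose e (k : 'I_#|I|) : I := enum_val k.
pose A : 'M[R]_#|I| := \matrix_(k, l) ((k == l)%:R - M (e l) (e k)).
have vA j (v : 'rV_#|I|) : (v *m A) 0 j = v 0 j - \sum_k M (e j) (e k) * v 0 k.
  rewrite mxE; under eq_bigr => k _ do rewrite mxE mulrBr.
  rewrite big_split /= sumrN (bigD1 j) //= eqxx mulr1 big1 ?addr0 => [|k /negbTE->].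
    by congr (_ - _); apply: eq_bigr => k _; rewrite mulrC.
  by rewrite mulr0.
have A_unit : A \in unitmx.
  rewrite unitmxE unitfE; apply/negP => /det0P[v /negP nv0 vA0]; apply: nv0.
  pose t j := v 0 (enum_rank j).
  have tM j : t j = \sum_k M j k * t k.
    move/matrixP: vA0 => /(_ 0 (enum_rank j)); rewrite vA mxE => /eqP.
    rewrite subr_eq0 /t => /eqP ->.
    rewrite /e enum_rankK (sum_enum_val (fun k => M j k * v 0 (enum_rank k))).
    by apply: eq_bigr => k _; rewrite enum_valK.
  apply/eqP/rowP => k; rewrite mxE -[k]enum_valK.
  exact: contraction_fixpoint_eq0 q01 Mq t tM _.
pose tv := (\row_k b (e k)) *m invmx A.
exists (fun j => tv 0 (enum_rank j)) => j.
have := vA (enum_rank j) tv; rewrite /tv -mulmxA mulVmx // mulmx1 mxE /e enum_rankK.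
move=> ->; rewrite (sum_enum_val (fun k => M j k * tv 0 (enum_rank k))) /e.
rewrite [X in _ + X](eq_bigr (fun k => M j (enum_val k) * tv 0 k)) ?subrK // => k _.
by rewrite enum_valK.
Qed.

Lemma exists_pos_fixpoint I (K : I -> I -> R) q : 0 <= q < 2^-1 ->
  (forall i j, 0 <= K i j) -> (forall i, \sum_j K i j <= q) ->
  exists t : I -> R, (forall i, 0 < t i) /\ forall i, t i = 1 - \sum_j K i j * t j.
Proof.
move=> /andP[q0 q2] K0 Kq; have q1 : q < 1 by lra.
have normK i : \sum_j `|K i j| = \sum_j K i j.
  by apply: eq_bigr => j _; rewrite ger0_norm.
have q01 : 0 <= q < 1 by rewrite q0.
have NKq i : \sum_j `|- K i j| <= q.
  by under eq_bigr do rewrite normrN; rewrite normK.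
have [t tK] := exists_affine_fixpoint (fun=> 1) q01 NKq.
have {}tK i : t i = 1 - \sum_j K i j * t j.
  by rewrite tK; under eq_bigr do rewrite mulNr; rewrite sumrN.
set m := supnorm t.
have Kt i : `|\sum_j K i j * t j| <= q * m.
  apply: le_trans (norm_sum_le_supnorm _ _) _.
  by rewrite normK ler_wpM2r ?Kq ?supnorm_ge0.
have m1 : m <= 1 / (1 - q).
  apply: supnorm_le_contraction => // i; rewrite tK.
  by apply: le_trans (ler_normB _ _) _; rewrite normr1 lerD2l Kt.
exists t; split=> // i; rewrite tK subr_gt0.
apply: le_lt_trans (ler_norm _) _; apply: le_lt_trans (Kt i) _.
move: m1; rewrite ler_pdivlMr ?subr_gt0 // => m1.
rewrite -(ltr_pM2r (_ : 0 < 1 - q)) ?subr_gt0 // mul1r -mulrA.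
have q_lt : q < 1 - q by lra.
exact: le_lt_trans (ler_piMr q0 m1) q_lt.
Qed.

Lemma diag_dominant_pos_solution I (C : I -> I -> R) (b : I -> R) q :
  0 <= q < 2^-1 -> (forall i j, 0 <= C i j) -> (forall i, 0 < C i i) ->
  (forall i, 0 < b i) ->
  (forall i, \sum_(j | j != i) b j * C i j / C j j <= q * b i) ->
  exists2 s : I -> R, (forall j, 0 < s j) & forall i, \sum_j s j * C i j = b i.
Proof.
move=> q01 C0 Cii b0 Cb.
pose K i j := if j == i then 0 else b j * C i j / C j j / b i.
have K0 i j : 0 <= K i j.
  by rewrite /K; case: eqP => // _; rewrite !divr_ge0 ?mulr_ge0 // ltW.
have Kq i : \sum_j K i j <= q.
  rewrite (bigD1 i) //= {1}/K eqxx add0r -(ler_pM2r (b0 i)) mulr_suml.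
  rewrite (eq_bigr (fun j => b j * C i j / C j j)) ?Cb // => j /negbTE ji.
  by rewrite /K ji divfK ?gt_eqF.
have [t [t0 tK]] := exists_pos_fixpoint q01 K0 Kq.
exists (fun j => t j * b j / C j j) => [j|i]; first by rewrite !divr_gt0 ?mulr_gt0.
have offdiag : \sum_(j | j != i) t j * b j / C j j * C i j = b i * \sum_j K i j * t j.
  rewrite [in RHS](bigD1 i) //= /K eqxx mul0r add0r mulr_sumr.
  apply: eq_bigr => j /negbTE ->.
  by field; rewrite !gt_eqF.
rewrite (bigD1 i) //= divfK ?gt_eqF // offdiag {1}tK; ring.
Qed.
End DominantSystems.

Section NestWeights.
Variables (R : realType) (X J : finType) (nest : J -> {set X}) (w : J -> X -> R).

Definition nest_value k A := \sum_(y in A :&: nest k) w k y.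

Variable n : nat.

Hypothesis w_gt0 : forall k y, y \in nest k -> 0 < w k y.
Hypothesis nest_cover : forall y, exists k, y \in nest k.

Lemma nest_value_ge0 k A : 0 <= nest_value k A.
Proof. by apply: sumr_ge0 => y /setIP[_ /w_gt0/ltW]. Qed.

Lemma nest_value_gt0 k A x : x \in A :&: nest k -> 0 < nest_value k A.
Proof.
move=> xAk; have /setIP[_ xk] := xAk.
rewrite /nest_value (bigD1 x) //= ltr_pwDl ?w_gt0 //.
by apply: sumr_ge0 => y /andP[/setIP[_ /w_gt0/ltW]].
Qed.

Definition gnl_weight k y := if y \in nest k then w k y ^+ n.+1 else 0.
Definition gnl_utility y := \sum_k gnl_weight k y.
Definition gnl_alpha (k : 'I_#|J|) y := gnl_weight (enum_val k) y / gnl_utility y.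

Lemma gnl_weight_ge0 k y : 0 <= gnl_weight k y.
Proof. by rewrite /gnl_weight; case: ifP => // /w_gt0/ltW/exprn_ge0->. Qed.

Lemma gnl_weight_eq0 k y : gnl_weight k y = 0 <-> y \notin nest k.
Proof.
rewrite /gnl_weight; case: ifP => yk; split => //= /eqP.
by rewrite expf_eq0 gt_eqF ?w_gt0 ?andbF.
Qed.

Lemma gnl_utility_gt0 y : 0 < gnl_utility y.
Proof.
have [k yk] := nest_cover y.
rewrite /gnl_utility (bigD1 k) //= ltr_pwDl ?sumr_ge0 // => [|j _].
  by rewrite /gnl_weight yk exprn_gt0 ?w_gt0.
exact: gnl_weight_ge0.
Qed.

Lemma gnl_alpha_utility k y : gnl_alpha k y * gnl_utility y = gnl_weight (enum_val k) y.
Proof. by rewrite /gnl_alpha divfK ?gt_eqF ?gnl_utility_gt0. Qed.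

Lemma gnl_nestsum_weights (k : 'I_#|J|) A :
  gnl_nestsum (nest \o enum_val) gnl_alpha gnl_utility (fun=> n.+1%:R) k A
  = nest_value (enum_val k) A.
Proof.
apply: eq_bigr => y /setIP[_ yk]; rewrite gnl_alpha_utility /gnl_weight yk.
by rewrite powR_exprnV // ltW ?w_gt0.
Qed.

Lemma unrestricted_GNL_of_weights (p : X -> {set X} -> R) :
  (forall A : {set X}, A != finset.set0 -> forall x, x \in A ->
     p x A = (\sum_(k | x \in nest k) w k x * nest_value k A ^+ n)
             / \sum_k nest_value k A ^+ n.+1) ->
  unrestricted_GNL p.
Proof.
move=> pE.
exists #|J|, (nest \o enum_val), gnl_alpha, gnl_utility, (fun=> n.+1%:R); split.
- by move=> k y; rewrite divr_ge0 ?gnl_weight_ge0 ?ltW ?gnl_utility_gt0.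
- move=> y; rewrite /gnl_alpha -mulr_suml -(sum_enum_val (gnl_weight^~ y)).
  by rewrite mulfV ?gt_eqF ?gnl_utility_gt0.
- move=> k y; rewrite -gnl_weight_eq0 /gnl_alpha; split=> [/eqP|->]; last exact: mul0r.
  by rewrite mulf_eq0 invr_eq0 (gt_eqF (gnl_utility_gt0 y)) orbF => /eqP.
- by split=> [y|k]; [exact: gnl_utility_gt0 | rewrite ltr0n].
move=> A A0 x xA; rewrite pE // /gnl_prob.
have -> : \sum_(l < #|J| | A :&: nest (enum_val l) != finset.set0)
    gnl_nestsum (nest \o enum_val) gnl_alpha gnl_utility (fun=> n.+1%:R) l A `^ n.+1%:R
    = \sum_k nest_value k A ^+ n.+1.
  rewrite big_mkcond [RHS]sum_enum_val; apply: eq_bigr => l _.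
  rewrite gnl_nestsum_weights powR_mulrn ?nest_value_ge0 //.
  case: ifP => // /negbFE/eqP Ak0.
  by rewrite /nest_value Ak0 big_set0 expr0n.
rewrite mulr_suml big_mkcond [RHS]big_mkcond [LHS]sum_enum_val; apply: eq_bigr => l _ /=.
rewrite inE xA /=; case: ifP => // xl.
have Sl : 0 < nest_value (enum_val l) A by apply: (@nest_value_gt0 _ _ x); rewrite inE xA.
rewrite gnl_alpha_utility gnl_nestsum_weights /gnl_weight xl powR_exprnV ?ltW ?w_gt0 //.
by rewrite powR_mulrn ?nest_value_ge0 // exprS !mulrA divfK ?gt_eqF.
Qed.
End NestWeights.

Section Construction.
Variables (R : realType) (X : finType) (p : X -> {set X} -> R).
Hypothesis hp : stochastic_choice p.
Implicit Types (A E : {set X}).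

Lemma choice_gt0 x A : x \in A -> 0 < p x A.
Proof.
move=> xA; have A0 : A != finset.set0 by apply/set0Pn; exists x.
by case: (hp A0) => _ _ _; apply.
Qed.

Lemma choice_le1 x A : x \in A -> p x A <= 1.
Proof.
move=> xA; have A0 : A != finset.set0 by apply/set0Pn; exists x.
by case: (hp A0) => /(_ x)/andP[].
Qed.

Lemma choice_sum A : A != finset.set0 -> \sum_(a in A) p a A = 1.
Proof. by move=> A0; case: (hp A0). Qed.

Definition menu_item := {i : {set X} * X | i.2 \in i.1}.
Definition menu (j : menu_item) := (val j).1.
Definition item (j : menu_item) := (val j).2.

Implicit Types (i j : menu_item).

Lemma item_in_menu j : item j \in menu j.
Proof. exact: (valP j). Qed.

Definition min_prob := \big[Num.min/1]_(j : menu_item) p (item j) (menu j).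

Lemma min_prob_gt0 : 0 < min_prob.
Proof. by apply/bigmin_gtP; split=> // j _; rewrite choice_gt0 ?item_in_menu. Qed.

Lemma min_prob_le j : min_prob <= p (item j) (menu j).
Proof. exact: bigmin_le. Qed.

Lemma min_prob_le1 : min_prob <= 1.
Proof. exact: bigmin_le_id. Qed.

(* The [.+1] keeps [eps] positive when [X], hence [menu_item], is empty. *)
Definition eps := min_prob / (3 * #|{: menu_item}|.+1%:R).

Lemma eps_gt0 : 0 < eps.
Proof. by rewrite divr_gt0 ?min_prob_gt0 // mulr_gt0 ?ltr0Sn. Qed.

Lemma eps_le1 : eps <= 1.
Proof.
apply: le_trans min_prob_le1; rewrite ler_pdivrMr ?mulr_gt0 ?ltr0Sn //.
have n1 : 1 <= #|{: menu_item}|.+1%:R :> R by rewrite ler1n.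
by rewrite ler_peMr ?ltW ?min_prob_gt0 //; lra.
Qed.

Definition menu_weight (A : {set X}) := eps^-1 ^+ #|A|.

Lemma menu_weight_gt0 A : 0 < menu_weight A.
Proof. by rewrite exprn_gt0 ?invr_gt0 ?eps_gt0. Qed.

Lemma menu_weight_ge1 A : 1 <= menu_weight A.
Proof. by rewrite exprn_ege1 // invf_ge1 ?eps_gt0 ?eps_le1. Qed.

Lemma menu_weight_le (E A : {set X}) : (#|E| <= #|A|)%N -> menu_weight E <= menu_weight A.
Proof. by move=> EA; rewrite ler_weXn2l // invf_ge1 ?eps_gt0 ?eps_le1. Qed.

Lemma menu_weight_lt (E A : {set X}) :
  (#|E| < #|A|)%N -> menu_weight E <= eps * menu_weight A.
Proof.
move=> EA; rewrite mulrC -ler_pdivrMr ?eps_gt0 // /menu_weight -exprSr.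
by rewrite ler_weXn2l // invf_ge1 ?eps_gt0 ?eps_le1.
Qed.

Definition item_weight (j : menu_item) y : R := if y == item j then 1 else eps.
Definition mass := nest_value menu item_weight.

Lemma item_weight_gt0 j y : 0 < item_weight j y.
Proof. by rewrite /item_weight; case: eqP; rewrite ?eps_gt0. Qed.

Lemma item_weight_le1 j y : item_weight j y <= 1.
Proof. by rewrite /item_weight; case: eqP; rewrite ?eps_le1. Qed.

Lemma eps_le_item_weight j y : eps <= item_weight j y.
Proof. by rewrite /item_weight; case: eqP; rewrite ?eps_le1. Qed.

Let weight_gt0 j y (_ : y \in menu j) := item_weight_gt0 j y.

Lemma mass_ge0 j A : 0 <= mass j A.
Proof. exact: nest_value_ge0 weight_gt0 j A. Qed.

Lemma mass_menu_gt0 j : 0 < mass j (menu j).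
Proof.
by apply: (nest_value_gt0 weight_gt0 (x := item j)); rewrite finset.setIid item_in_menu.
Qed.

Lemma mass_le_card j A : mass j A <= #|X|%:R.
Proof.
apply: le_trans (_ : \sum_(y in A :&: menu j) 1 <= _).
  by apply: ler_sum => y _; exact: item_weight_le1.
by rewrite sumr_const ler_nat max_card.
Qed.

Lemma mass_split j A :
  mass j (menu j) = mass j A + \sum_(y in menu j | y \notin A) item_weight j y.
Proof.
rewrite /mass /nest_value finset.setIid (bigID (mem A)) /=; congr (_ + _).
by apply: eq_bigl => y; rewrite !inE andbC.
Qed.

Lemma mass_subset j A : menu j \subset A -> mass j A = mass j (menu j).
Proof. by move=> EA; rewrite /mass /nest_value finset.setIid (finset.setIidPr EA). Qed.

Definition ratio_bound := 1 - eps / #|X|.+1%:R.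

Lemma ratio_bound_ge0 : 0 <= ratio_bound.
Proof.
rewrite subr_ge0 ler_pdivrMr ?ltr0Sn // mul1r.
by apply: le_trans eps_le1 _; rewrite ler1n.
Qed.

Lemma ratio_bound_lt1 : ratio_bound < 1.
Proof. by rewrite ltrBlDr ltrDl divr_gt0 ?eps_gt0 ?ltr0Sn. Qed.

Definition large_exponent n := eps^-1 ^+ #|X| * ratio_bound ^+ n <= eps.

Lemma mass_ratio_le j A :
  ~~ (menu j \subset A) -> mass j A / mass j (menu j) <= ratio_bound.
Proof.
case/subsetPn=> y yE yA; have VE := mass_menu_gt0 j.
have gap : mass j A + eps <= mass j (menu j).
  rewrite (mass_split j A) lerD2l (bigD1 y) ?yE //= ler_wpDr ?eps_le_item_weight //.
  by apply: sumr_ge0 => z _; rewrite ltW ?item_weight_gt0.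
have VX : mass j (menu j) <= #|X|.+1%:R.
  by apply: le_trans (mass_le_card _ _) _; rewrite ler_nat.
rewrite ler_pdivrMr // /ratio_bound mulrBl mul1r lerBrDr.
apply: le_trans gap; rewrite lerD2l mulrC mulrA ler_pdivrMr ?ltr0Sn //.
by rewrite mulrC; apply: ler_wpM2l => //; exact: ltW eps_gt0.
Qed.

Definition nest_contrib n A x j :=
  if x \in menu j then item_weight j x * mass j A ^+ n else 0.
Definition target i := menu_weight (menu i) * p (item i) (menu i).

Lemma nest_contrib_ge0 n A x j : 0 <= nest_contrib n A x j.
Proof.
rewrite /nest_contrib; case: ifP => // _.
by rewrite mulr_ge0 ?exprn_ge0 ?mass_ge0 ?ltW ?item_weight_gt0.
Qed.

Lemma nest_contrib_diag n j : nest_contrib n (menu j) (item j) j = mass j (menu j) ^+ n.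
Proof. by rewrite /nest_contrib item_in_menu /item_weight eqxx mul1r. Qed.

Lemma nest_contrib_diag_gt0 n j : 0 < nest_contrib n (menu j) (item j) j.
Proof. by rewrite nest_contrib_diag exprn_gt0 ?mass_menu_gt0. Qed.

Lemma target_gt0 i : 0 < target i.
Proof. by rewrite mulr_gt0 ?menu_weight_gt0 ?choice_gt0 ?item_in_menu. Qed.

Lemma target_le i : target i <= menu_weight (menu i).
Proof. exact: ler_piMr (ltW (menu_weight_gt0 _)) (choice_le1 (item_in_menu i)). Qed.

Lemma offdiag_term_subset i j : j != i -> menu j \subset menu i ->
  target j * item_weight j (item i) <= eps * menu_weight (menu i).
Proof.
move=> ji EA; have eps0 := eps_gt0.
case: (eqVneq (item j) (item i)) => [zx | /negbTE zx].
  have EAneq : menu j != menu i.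
    apply: contraNneq ji => EAeq; apply/eqP/val_inj.
    by rewrite [val j]surjective_pairing [val i]surjective_pairing; congr (_, _).
  rewrite /item_weight zx eqxx mulr1; apply: le_trans (target_le j) _.
  by apply: menu_weight_lt; rewrite proper_card // finset.properEneq EAneq.
rewrite /item_weight eq_sym zx mulrC; apply: ler_wpM2l; first exact: ltW.
exact: le_trans (target_le j) (menu_weight_le (subset_leq_card EA)).
Qed.

Lemma offdiag_term_le n : large_exponent n -> forall i j, j != i ->
  target j * nest_contrib n (menu i) (item i) j / nest_contrib n (menu j) (item j) j
    <= eps * menu_weight (menu i).
Proof.
move=> small i j ji; have eps0 := eps_gt0; have VE := mass_menu_gt0 j.
rewrite nest_contrib_diag /nest_contrib; case: ifP => xE; last first.
  by rewrite mulr0 mul0r mulr_ge0 ?ltW ?menu_weight_gt0.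
set rho := mass j (menu i) / mass j (menu j).
have -> : target j * (item_weight j (item i) * mass j (menu i) ^+ n) / mass j (menu j) ^+ n
    = target j * item_weight j (item i) * rho ^+ n.
  by rewrite expr_div_n; field; rewrite expf_neq0 // gt_eqF.
have rho0 : 0 <= rho by rewrite divr_ge0 ?mass_ge0.
have tv0 : 0 <= target j * item_weight j (item i).
  by rewrite mulr_ge0 ?ltW ?target_gt0 ?item_weight_gt0.
have [EA | EA] := boolP (menu j \subset menu i).
  rewrite /rho mass_subset // divff ?gt_eqF // expr1n mulr1.
  exact: offdiag_term_subset.
have rho_r : rho ^+ n <= ratio_bound ^+ n.
  by rewrite lerXn2r ?nnegrE ?ratio_bound_ge0 ?mass_ratio_le.
apply: le_trans (_ : menu_weight (menu j) * ratio_bound ^+ n <= _).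
  apply: ler_pM => //; first by rewrite exprn_ge0.
  exact: le_trans (ler_piMr (ltW (target_gt0 j)) (item_weight_le1 j _)) (target_le j).
apply: le_trans (_ : eps^-1 ^+ #|X| * ratio_bound ^+ n <= _).
  apply: ler_wpM2r; first by rewrite exprn_ge0 ?ratio_bound_ge0.
  by rewrite ler_weXn2l ?max_card // invf_ge1 ?eps_le1.
by apply: le_trans small _; rewrite ler_peMr ?menu_weight_ge1 ?(ltW eps0).
Qed.

Lemma diag_dominance n : large_exponent n -> forall i,
  \sum_(j | j != i)
     target j * nest_contrib n (menu i) (item i) j / nest_contrib n (menu j) (item j) j
  <= 3^-1 * target i.
Proof.
move=> small i; set N : R := #|{: menu_item}|.+1%:R.
apply: le_trans (_ : \sum_(j | j != i) eps * menu_weight (menu i) <= _).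
  by apply: ler_sum => j; exact: offdiag_term_le.
have w0 : 0 <= eps * menu_weight (menu i).
  by rewrite mulr_ge0 ?ltW ?eps_gt0 ?menu_weight_gt0.
rewrite sumr_const -[X in X <= _]mulr_natr.
apply: le_trans (_ : eps * menu_weight (menu i) * N <= _).
  by rewrite ler_wpM2l // ler_nat (leqW (max_card _)).
have -> : eps * menu_weight (menu i) * N = 3^-1 * (menu_weight (menu i) * min_prob).
  by rewrite /eps /N; field; rewrite addrC natr1 pnatr_eq0.
rewrite /target; apply: ler_wpM2l; first by rewrite invr_ge0.
apply: ler_wpM2l; [exact: ltW (menu_weight_gt0 _) | exact: min_prob_le].
Qed.

Lemma exists_large_exponent : exists n, large_exponent n.
Proof.
have N0 : 0 < eps^-1 ^+ #|X| by rewrite exprn_gt0 ?invr_gt0 ?eps_gt0.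
have [n rn] : exists n : nat, ratio_bound ^+ n <= eps / eps^-1 ^+ #|X|.
  apply: exists_exprn_le; first by rewrite ratio_bound_ge0 ratio_bound_lt1.
  by rewrite divr_gt0 ?eps_gt0.
by exists n; rewrite /large_exponent mulrC -ler_pdivlMr.
Qed.

Lemma mass_exprS n j A : mass j A ^+ n.+1 = \sum_(y in A) nest_contrib n A y j.
Proof.
rewrite exprS /mass /nest_value mulr_suml /nest_contrib -big_mkcondr /=.
by apply: eq_bigl => y; rewrite inE.
Qed.

Lemma unrestricted_GNL_of_solution n (s : menu_item -> R) : (forall j, 0 < s j) ->
  (forall i, \sum_j s j * nest_contrib n (menu i) (item i) j = target i) ->
  unrestricted_GNL p.
Proof.
move=> s0 sC; pose c j := powR (s j) (n.+1%:R)^-1.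
have c0 j : 0 < c j by rewrite powR_gt0.
have cS j : c j ^+ n.+1 = s j by rewrite exprn_powRV ?ltW.
have sC' A x : x \in A -> \sum_j s j * nest_contrib n A x j = menu_weight A * p x A.
  by move=> xA; exact: (sC (exist _ (A, x) xA)).
apply: (@unrestricted_GNL_of_weights _ _ _ menu (fun j y => c j * item_weight j y) n).
- by move=> j y _; rewrite mulr_gt0 ?item_weight_gt0.
- by move=> y; exists (exist _ ([set y], y) (set11 y)); rewrite /menu /= set11.
move=> A A0 x xA.
have cV j : nest_value menu (fun j y => c j * item_weight j y) j A = c j * mass j A.
  by rewrite /mass /nest_value mulr_sumr.
under eq_bigr => j _ do rewrite cV; under [X in _ / X]eq_bigr => j _ do rewrite cV.
have num : \sum_(j | x \in menu j) c j * item_weight j x * (c j * mass j A) ^+ n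
    = menu_weight A * p x A.
  rewrite -sC' // big_mkcond; apply: eq_bigr => j _; rewrite /nest_contrib.
  by case: ifP => _; [rewrite -cS exprMn exprS; ring | rewrite mulr0].
have den : \sum_j (c j * mass j A) ^+ n.+1 = menu_weight A.
  rewrite (eq_bigr (fun j => \sum_(y in A) s j * nest_contrib n A y j)); last first.
    by move=> j _; rewrite exprMn cS mass_exprS mulr_sumr.
  rewrite exchange_big /= (eq_bigr (fun y => menu_weight A * p y A)) => [|y yA].
    by rewrite -mulr_sumr choice_sum // mulr1.
  exact: sC'.
by rewrite num den mulrC mulKf // gt_eqF // menu_weight_gt0.
Qed.
End Construction.

Unset Implicit Arguments.

Theorem corollary1 (R : realType) (X : finType) (p : X -> {set X} -> R) :
  stochastic_choice p -> unrestricted_GNL p.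
Proof.
move=> hp; have [n small] := exists_large_exponent hp.
have q01 : 0 <= (3^-1 : R) < 2^-1 by apply/andP; split; lra.
have [s s0 sC] := diag_dominant_pos_solution q01
  (fun i j => nest_contrib_ge0 hp n (menu i) (item i) j)
  (fun j => nest_contrib_diag_gt0 hp n j)
  (target_gt0 hp) (diag_dominance hp small).
exact: (@unrestricted_GNL_of_solution _ _ _ hp n s s0 sC).
Qed.
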